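(* Let $\delta\in(0,1)$ and let $G$ be the three-vertex star (path on three vertices) with vertex set $V=\{S,R,W\}$, where the roles of sender $S$, receiver $R$ and the single witness $W$ are assigned to the three vertices in any of the possible ways, and let $\mathcal H=\{\{i,j\}:\{i,j\}\in E(G)\}$. Then the effective bias of the conference $V$ with witness set $\{W\}$ equals $$b_{\mathrm{eff}}=\frac{b^S_R+b^S_W+b^W_R}{2}=\delta+\delta^2,$$ for every assignment of roles. Consequently $N(\delta+\delta^2)\le N(\delta)$ and $N(\delta+\delta^2)\le N(\delta+\tfrac23\delta^2)$: the presence of the witness weakly reduces the number of equilibrium partitions relative to a two-player bias $\delta$ and relative to the private-conversation bias $\delta+\tfrac23\delta^2$.
   Context: For a finite simple undirected graph $G=(V,E)$ and $\delta\in(0,1)$: $v^G(S):=\sum_{i\in S}\sum_{j\in S,\,j\neq i}\delta^{t_{ij}(G[S])}$ for $S\subseteq V$, where $t_{ij}(G[S])$ is the distance in the induced subgraph ($\infty$ if disconnected, $\delta^\infty:=0$). For a conference structure $\mathcal H$ and $C\subseteq V$, $C/\mathcal H$ is the partition of $C$ into classes connected via chains of pairwise-intersecting members of $\mathcal H$ contained in $C$; $r^{v^G}_{\mathcal H}(C):=\sum_{B\in C/\mathcal H}v^G(B)$; for $X\subseteq V$, $\mathcal H|_X:=\{H\in\mathcal H:H\subseteq X\}$. $\mu_j(X;u)$ denotes the Shapley value of player $j$ in the TU game $u$ on player set $X$. Bargaining-power components: $b^j_i:=\mu_j(V;r^{v^G}_{\mathcal H})-\mu_j(V\setminus\{i\};r^{v^G}_{\mathcal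 H|_{V\setminus\{i\}}})$. Effective bias with sender $S$, receiver $R$, witness set $W$: $b_{\mathrm{eff}}:=\bigl(b^S_R+\sum_{w\in W}(b^S_w+b^w_R)\bigr)/(|W|+1)$. For $b>0$, $N(b)$ denotes the unique integer $N\ge1$ with $\beta(N)\le b<\beta(N-1)$, where $\beta(N)=\frac1{2N(N+1)}$ and $\beta(0)=+\infty$ (the number of intervals of the Pareto-superior Crawford–Sobel partition equilibrium with bias $b$); $N$ is non-increasing in $b$. *)

From mathcomp Require Import all_boot all_order all_algebra.
Set Implicit Arguments. Unset Strict Implicit. Unset Printing Implicit Defensive.
Import Order.TTheory GRing.Theory Num.Theory.
Local Open Scope ring_scope.

Section Defs.
Variable T : finType.

Fixpoint nball (e : rel T) (S : {set T}) (i : T) (k : nat) : {set T} :=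
  match k with
  | 0 => [set x in S | x == i]
  | k'.+1 => let B := nball e S i k' in
             B :|: [set y in S | [exists x in B, e x y]]
  end.

(* distance t_ij(G[S]); None = infinity (disconnected) *)
Definition dist (e : rel T) (S : {set T}) (i j : T) : option nat :=
  let k := find (fun k => j \in nball e S i k) (iota 0 #|T|) in
  if (k < #|T|)%N then Some k else None.

Variable R : realFieldType.

Definition dpow (d : R) (o : option nat) : R :=
  if o is Some k then d ^+ k else 0.

Definition vG (e : rel T) (d : R) (S : {set T}) : R :=
  \sum_(i in S) \sum_(j in S | j != i) dpow d (dist e S i j).

Definition hrel (Hs : {set {set T}}) (C : {set T}) : rel T :=
  fun x y => [exists H0 in Hs, [&& H0 \subset C, x \in H0 & y \in H0]].

Definition classes (Hs : {set {set T}}) (C : {set T}) : {set {set T}} :=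
  [set [set y in C | connect (hrel Hs C) x y] | x in C].

Definition rgame (v : {set T} -> R) (Hs : {set {set T}}) (C : {set T}) : R :=
  \sum_(B in classes Hs C) v B.

Definition restrH (Hs : {set {set T}}) (X : {set T}) : {set {set T}} :=
  [set H0 in Hs | H0 \subset X].

Definition shapley (X : {set T}) (u : {set T} -> R) (j : T) : R :=
  \sum_(S in powerset (X :\ j))
     ((#|S|`! * (#|X| - #|S| - 1)`!)%:R / (#|X|`!)%:R) * (u (j |: S) - u S).

Definition bpow (e : rel T) (d : R) (Hs : {set {set T}}) (j i : T) : R :=
  shapley [set: T] (rgame (vG e d) Hs) j
  - shapley ([set: T] :\ i) (rgame (vG e d) (restrH Hs ([set: T] :\ i))) j.

Definition beff (e : rel T) (d : R) (Hs : {set {set T}}) (S Rc : T) (W : {set T}) : R :=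
  (bpow e d Hs S Rc + \sum_(w in W) (bpow e d Hs S w + bpow e d Hs w Rc))
  / (#|W|.+1)%:R.

End Defs.

Definition beta (R : realFieldType) (N : nat) : R := 1 / (2 * N%:R * (N.+1)%:R).

(* N = N(b): the unique N >= 1 with beta(N) <= b < beta(N-1), beta(0) = +oo *)
Definition is_CS_N (R : realFieldType) (b : R) (N : nat) : Prop :=
  (1 <= N)%N /\ beta R N <= b /\ (N = 1%N \/ b < beta R N.-1).

(* path on three vertices 0 - 1 - 2 *)
Definition path3 : rel 'I_3 :=
  fun x y => ((val x == 1%N) && (val y != 1%N)) || ((val y == 1%N) && (val x != 1%N)).

Definition H3 : {set {set 'I_3}} :=
  [set B : {set 'I_3} | [exists x : 'I_3, [exists y : 'I_3, path3 x y && (B == [set x; y])]]].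

From mathcomp Require Import all_boot all_order all_algebra.
From mathcomp Require Import ring lra zify.
Set Implicit Arguments. Unset Strict Implicit. Unset Printing Implicit Defensive.
Import Order.TTheory GRing.Theory Num.Theory.
Local Open Scope ring_scope.

(** On the three-vertex path the hub is at distance 1 from both leaves and the
    leaves are at distance 2 through the hub, so [v] is [4d + 2d^2] on the whole
    vertex set, [2d] on a pair containing the hub, and 0 otherwise.  Since H
    contains every edge, the conference game coincides with [v] on every
    coalition.  Hence the Shapley values are [d + 2d^2/3] for a leaf and
    [2d + 2d^2/3] for the hub; removing a leaf leaves a symmetric two-player game
    with values [d], removing the hub leaves the null game.  So [b^j_i] is
    [d + 2d^2/3] when the hub is [i] or [j] and [2d^2/3] otherwise.  Whatever the
    roles, the hub lies in exactly two of the pairs (S,R), (S,W), (W,R), which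
    gives [b_eff = d + d^2].  Finally [d <= d + 2d^2/3 <= d + d^2] and [N] is
    nonincreasing in the bias because [beta] is decreasing. *)

Section General.
Variables (T : finType) (R : realFieldType).

Lemma nball0E (e : rel T) (S : {set T}) (i j : T) :
  (j \in nball e S i 0) = (j \in S) && (j == i).
Proof. by rewrite /= inE. Qed.

Lemma nballSE (e : rel T) (S : {set T}) (i j : T) k :
  (j \in nball e S i k.+1) =
    (j \in nball e S i k) || (j \in S) && [exists x, (x \in nball e S i k) && e x j].
Proof. by rewrite /= !inE. Qed.

Lemma eq_shapley (X : {set T}) (u u' : {set T} -> R) j : j \in X ->
  (forall C : {set T}, C \subset X -> u C = u' C) -> shapley X u j = shapley X u' j.
Proof.
move=> jX eq_u; apply: eq_bigr => S; rewrite powersetE => sSX.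
have sX : S \subset X by apply: subset_trans sSX (subD1set _ _).
rewrite !eq_u //; apply/subsetP => z; rewrite in_setU1 => /orP[/eqP-> //|].
exact: (subsetP sX).
Qed.

Lemma rgame_eq0 (v : {set T} -> R) (Hs : {set {set T}}) (C : {set T}) :
  (forall B : {set T}, B \subset C -> v B = 0) -> rgame v Hs C = 0.
Proof.
move=> v0; rewrite /rgame big1 // => B /imsetP [x _ ->]; apply: v0.
by apply/subsetP => y; rewrite inE => /andP[].
Qed.

Lemma rgame_connected (v : {set T} -> R) (Hs : {set {set T}}) (C : {set T}) x0 : x0 \in C ->
  {in C &, forall x y, connect (hrel Hs C) x y} -> rgame v Hs C = v C.
Proof.
move=> x0C conC; rewrite /rgame; suff -> : classes Hs C = [set C] by rewrite big_set1.
have classE x : x \in C -> [set y in C | connect (hrel Hs C) x y] = C.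
  by move=> xC; apply/setP => y; rewrite inE andb_idr // => /(conC x y xC).
apply/setP => B; rewrite inE; apply/imsetP/eqP => [[x xC ->]|->]; first exact: classE.
by exists x0; rewrite ?classE.
Qed.

Lemma hrel_edge (Hs : {set {set T}}) (C : {set T}) x y :
  [set x; y] \in Hs -> [set x; y] \subset C -> hrel Hs C x y.
Proof. by move=> xyH xyC; apply/existsP; exists [set x; y]; rewrite xyH xyC !inE !eqxx orbT. Qed.

Lemma beff_set1 (e : rel T) (d : R) (Hs : {set {set T}}) (S Rc W : T) :
  beff e d Hs S Rc [set W] = (bpow e d Hs S Rc + bpow e d Hs S W + bpow e d Hs W Rc) / 2.
Proof. by rewrite /beff big_set1 cards1 addrA. Qed.

End General.

Lemma le_beta (R : realFieldType) m n : (0 < m)%N -> (m <= n)%N -> beta R n <= beta R m.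
Proof.
move=> m_gt0 mn; rewrite /beta !div1r lef_pV2 ?posrE ?mulr_gt0 ?ltr0n //; last by lia.
have le_mn : m%:R <= n%:R :> R by rewrite ler_nat.
have le_mn1 : m.+1%:R <= n.+1%:R :> R by rewrite ler_nat.
have m_ge0 : 0 <= m%:R :> R by rewrite ler0n.
have m1_ge0 : 0 <= m.+1%:R :> R by rewrite ler0n.
nra.
Qed.

Lemma is_CS_N_le (R : realFieldType) (b1 b2 : R) N1 N2 : b2 <= b1 ->
  is_CS_N b1 N1 -> is_CS_N b2 N2 -> (N1 <= N2)%N.
Proof.
move=> b21 [_ [_ N1_cases]] [N2_gt0 [b2_ge _]].
case: N1_cases => [-> // | b1_lt]; rewrite leqNgt; apply/negP => N21.
have beta_le : beta R N1.-1 <= beta R N2 by apply: le_beta; lia.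
lra.
Qed.

Definition leaf0 : 'I_3 := @Ordinal 3 0 isT.
Definition hub : 'I_3 := @Ordinal 3 1 isT.
Definition leaf2 : 'I_3 := @Ordinal 3 2 isT.

Lemma ord3_ind (P : 'I_3 -> Prop) : P leaf0 -> P hub -> P leaf2 -> forall x, P x.
Proof.
move=> P0 P1 P2 [[|[|[|//]]] lt_x3].
- by rewrite (_ : Ordinal lt_x3 = leaf0) //; apply: val_inj.
- by rewrite (_ : Ordinal lt_x3 = hub) //; apply: val_inj.
- by rewrite (_ : Ordinal lt_x3 = leaf2) //; apply: val_inj.
Qed.

Lemma exists_ord3 (P : pred 'I_3) : [exists x, P x] = [|| P leaf0, P hub | P leaf2].
Proof.
apply/existsP/or3P => [[x]|]; last by case=> Px; eexists; exact: Px.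
by elim/ord3_ind: x => Px; [constructor 1|constructor 2|constructor 3].
Qed.

Lemma sum_ord3 (R : realFieldType) (P : pred 'I_3) (F : 'I_3 -> R) :
  \sum_(i | P i) F i =
    (if P leaf0 then F leaf0 else 0) + (if P hub then F hub else 0)
    + (if P leaf2 then F leaf2 else 0).
Proof.
rewrite big_mkcond /= !big_ord_recl big_ord0 addr0 addrA.
by congr (_ + _ + _); congr (if P _ then F _ else _); apply: val_inj.
Qed.

Definition set3 (p q r : bool) : {set 'I_3} :=
  [set x | if x == leaf0 then p else if x == hub then q else r].

Lemma in_set3 x p q r :
  (x \in set3 p q r) = (if x == leaf0 then p else if x == hub then q else r).
Proof. by rewrite inE. Qed.

Lemma set3E (S : {set 'I_3}) : S = set3 (leaf0 \in S) (hub \in S) (leaf2 \in S).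
Proof. by apply/setP; elim/ord3_ind; rewrite in_set3. Qed.

Lemma eq_set3 p q r p' q' r' :
  (set3 p q r == set3 p' q' r') = [&& p == p', q == q' & r == r'].
Proof.
apply/eqP/and3P => [/setP eq_pqr|[/eqP-> /eqP-> /eqP->]] //.
by split; apply/eqP; [move: (eq_pqr leaf0)|move: (eq_pqr hub)|move: (eq_pqr leaf2)];
  rewrite !in_set3.
Qed.

Lemma subset_ord3 (A B : {set 'I_3}) : (A \subset B) =
  [&& (leaf0 \in A) ==> (leaf0 \in B), (hub \in A) ==> (hub \in B)
    & (leaf2 \in A) ==> (leaf2 \in B)].
Proof.
apply/subsetP/and3P => [AB|[/implyP AB0 /implyP AB1 /implyP AB2]]; last by elim/ord3_ind.
by split; apply/implyP; apply: AB.
Qed.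

Lemma setU1_set3 p q r j :
  j |: set3 p q r = set3 (p || (j == leaf0)) (q || (j == hub)) (r || (j == leaf2)).
Proof.
by apply/setP; elim/ord3_ind; rewrite in_setU1 !in_set3;
  elim/ord3_ind: j; case: p; case: q; case: r.
Qed.

Lemma setD1_set3 p q r j :
  set3 p q r :\ j = set3 (p && (j != leaf0)) (q && (j != hub)) (r && (j != leaf2)).
Proof.
by apply/setP; elim/ord3_ind; rewrite in_setD1 !in_set3;
  elim/ord3_ind: j; case: p; case: q; case: r.
Qed.

Lemma setT_set3 : [set: 'I_3] = set3 true true true.
Proof. by apply/setP; elim/ord3_ind; rewrite in_setT in_set3. Qed.

Lemma card_set3 p q r : #|set3 p q r| = (p + q + r)%N.
Proof.
rewrite -sum1_card big_mkcond /= !big_ord_recl big_ord0 /=.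
have -> : (ord0 : 'I_3) = leaf0 by apply: val_inj.
by rewrite !in_set3 /=; case: p; case: q; case: r.
Qed.

Definition set3_seq : seq {set 'I_3} :=
  [:: set3 true true true; set3 true true false; set3 true false true;
      set3 true false false; set3 false true true; set3 false true false;
      set3 false false true; set3 false false false].

Lemma sum_set_ord3 (R : realFieldType) (P : pred {set 'I_3}) (F : {set 'I_3} -> R) :
  \sum_(S | P S) F S = \sum_(S <- set3_seq) (if P S then F S else 0).
Proof.
rewrite big_mkcond; apply: perm_big; apply: uniq_perm; first exact: index_enum_uniq.
  by rewrite /set3_seq /= !in_cons !eq_set3.
move=> S; rewrite mem_index_enum (set3E S) /set3_seq /= !in_cons !eq_set3.
by case: (leaf0 \in S); case: (hub \in S); case: (leaf2 \in S).
Qed.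

Lemma dist_ord3 (e : rel 'I_3) (S : {set 'I_3}) (i j : 'I_3) : dist e S i j =
  if j \in nball e S i 0 then Some 0%N else if j \in nball e S i 1 then Some 1%N
  else if j \in nball e S i 2 then Some 2%N else None.
Proof.
rewrite /dist card_ord /=.
by case: (j \in nball e S i 0); case: (j \in nball e S i 1); case: (j \in nball e S i 2).
Qed.

Arguments nball : simpl never.

Lemma dist_path3 (S : {set 'I_3}) (i j : 'I_3) : dist path3 S i j =
  if (i \in S) && (j \in S) then
    if i == j then Some 0%N
    else if (i == hub) || (j == hub) then Some 1%N
    else if hub \in S then Some 2%N else None
  else None.
Proof.
rewrite (set3E S) dist_ord3 !(nballSE, nball0E, exists_ord3) !in_set3.
by case: (leaf0 \in S); case: (hub \in S); case: (leaf2 \in S);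
  elim/ord3_ind: i; elim/ord3_ind: j.
Qed.

Lemma vG_path3 (R : realFieldType) (d : R) p q r : vG path3 d (set3 p q r) =
  if p && q && r then 4 * d + 2 * d ^+ 2 else if q && (p || r) then 2 * d else 0.
Proof.
by case: p; case: q; case: r; rewrite /vG !sum_ord3 !dist_path3 !in_set3 /dpow /=; ring.
Qed.

Section ShapleyPath3.
Variables (R : realFieldType) (d : R).

Lemma shapley_path3 (j : 'I_3) :
  shapley [set: 'I_3] (vG path3 d) j = (if j == hub then 2 * d else d) + 2 / 3 * d ^+ 2.
Proof.
rewrite /shapley setT_set3 setD1_set3 sum_set_ord3 /set3_seq !big_cons big_nil.
rewrite !powersetE !subset_ord3 !in_set3 !setU1_set3 !card_set3 !vG_path3.
elim/ord3_ind: j => /=;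
  by rewrite !(addn0, add0n, addn1, subSS, subn0, subnn) !factS fact0 !natrM; field.
Qed.

Lemma shapley_path3D1 (i j : 'I_3) : j != i ->
  shapley ([set: 'I_3] :\ i) (vG path3 d) j = if i == hub then 0 else d.
Proof.
rewrite /shapley setT_set3 !setD1_set3 sum_set_ord3 /set3_seq !big_cons big_nil.
rewrite !powersetE !subset_ord3 !in_set3 !setU1_set3 !card_set3 !vG_path3.
elim/ord3_ind: i; elim/ord3_ind: j => //= _;
  by rewrite !(addn0, add0n, addn1, subSS, subn0, subnn) !factS fact0 !natrM; field.
Qed.

End ShapleyPath3.

Lemma path3_hub (x : 'I_3) : x != hub -> path3 x hub /\ path3 hub x.
Proof. by elim/ord3_ind: x. Qed.

Lemma vG_path3_eq0 (R : realFieldType) (d : R) (C B : {set 'I_3}) :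
  ~~ [&& hub \in C & (leaf0 \in C) || (leaf2 \in C)] -> B \subset C -> vG path3 d B = 0.
Proof.
rewrite subset_ord3 (set3E B) vG_path3 !in_set3 /=.
by case: (leaf0 \in C); case: (hub \in C); case: (leaf2 \in C);
  case: (leaf0 \in B); case: (hub \in B); case: (leaf2 \in B).
Qed.

Lemma rgame_path3 (R : realFieldType) (d : R) (Hs : {set {set 'I_3}}) (C : {set 'I_3}) :
  (forall x y, path3 x y -> x \in C -> y \in C -> [set x; y] \in Hs) ->
  rgame (vG path3 d) Hs C = vG path3 d C.
Proof.
move=> edgesHs.
have [/andP[hubC _]|C_edgeless] := boolP [&& hub \in C & (leaf0 \in C) || (leaf2 \in C)].
  have edge x y : x \in C -> y \in C -> path3 x y -> hrel Hs C x y.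
    move=> xC yC xy; apply: hrel_edge; first exact: edgesHs.
    by apply/subsetP => z; rewrite !inE => /orP[]/eqP->.
  have to_hub x : x \in C -> connect (hrel Hs C) x hub /\ connect (hrel Hs C) hub x.
    move=> xC; have [->|x_hub] := eqVneq x hub; first by split; exact: connect0.
    by have [xh hx] := path3_hub x_hub; split; apply/connect1/edge.
  apply: (rgame_connected _ hubC) => x y xC yC.
  by apply: (connect_trans (y := hub)); [case: (to_hub x xC) | case: (to_hub y yC)].
by rewrite rgame_eq0 ?(vG_path3_eq0 _ C_edgeless) // => B; exact: vG_path3_eq0.
Qed.

Lemma edge_H3 x y : path3 x y -> [set x; y] \in H3.
Proof. by move=> xy; rewrite inE; apply/existsP; exists x; apply/existsP; exists y; rewrite xy eqxx. Qed.

Lemma bpow_path3 (R : realFieldType) (d : R) (j i : 'I_3) : j != i ->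
  bpow path3 d H3 j i = (if (j == hub) || (i == hub) then d else 0) + 2 / 3 * d ^+ 2.
Proof.
move=> ji; rewrite /bpow.
have -> : shapley [set: 'I_3] (rgame (vG path3 d) H3) j = shapley [set: 'I_3] (vG path3 d) j.
  apply: eq_shapley => [|C _]; first exact: in_setT.
  by apply: rgame_path3 => x y xy _ _; exact: edge_H3.
have -> : shapley ([set: 'I_3] :\ i) (rgame (vG path3 d) (restrH H3 ([set: 'I_3] :\ i))) j
        = shapley ([set: 'I_3] :\ i) (vG path3 d) j.
  apply: eq_shapley => [|C sC]; first by rewrite in_setD1 ji in_setT.
  apply: rgame_path3 => x y xy xC yC; rewrite inE edge_H3 //=.
  by apply/subsetP => z; rewrite in_set2 => /orP[]/eqP->; apply: (subsetP sC).
rewrite shapley_path3 shapley_path3D1 //.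
by elim/ord3_ind: j ji; elim/ord3_ind: i => //= _; ring.
Qed.

Theorem proposition2 (R : realFieldType) (d : R) :
  0 < d -> d < 1 ->
  (forall S Rc W : 'I_3, S != Rc -> S != W -> Rc != W ->
     beff path3 d H3 S Rc [set W]
       = (bpow path3 d H3 S Rc + bpow path3 d H3 S W + bpow path3 d H3 W Rc) / 2
     /\ beff path3 d H3 S Rc [set W] = d + d ^+ 2)
  /\ (forall N1 N2 : nat, is_CS_N (d + d ^+ 2) N1 -> is_CS_N d N2 -> (N1 <= N2)%N)
  /\ (forall N1 N3 : nat, is_CS_N (d + d ^+ 2) N1 ->
        is_CS_N (d + 2 / 3 * d ^+ 2) N3 -> (N1 <= N3)%N).
Proof.
move=> d_gt0 _; have d2_ge0 : 0 <= d ^+ 2 by rewrite exprn_ge0 // ltW.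
split; last by split=> N1 N2; apply: is_CS_N_le; lra.
move=> S Rc W SRc SW RcW; rewrite beff_set1; split=> //.
rewrite !bpow_path3 // 1?eq_sym //.
by move: SRc SW RcW; elim/ord3_ind: S; elim/ord3_ind: Rc; elim/ord3_ind: W => //= *; field.
Qed.
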